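(* Let $A$ be a finite abelian group, $G$ a group acting on $A$, $H\le G$, $q$ a prime, $f\in\mathcal{E}(G,H,A)$ and $a\in A$ with $f(a)<0$. Then: (1) For every cocyclic coset $C$ of $A$, either $C\cap\ell_G(a)=\emptyset$ or $C\cap\ell_G(a)\not\subseteq a^H$. (2) Suppose the Hall $q'$-subgroup $A_{q'}$ is cyclic. Then (a) $[\mathrm{C}_H(a_{q'}):\mathrm{C}_H(a)]\ge q$, and hence $[\mathrm{C}_H(a_{q'}):\mathrm{C}_H(a_{q'})\cap\mathrm{C}_H(A_q)]\ge q$; (b) if moreover $A_q\cong C_q\times C_q$, then (i) the center of $\mathrm{C}_{\mathrm{Aut}(A)}(A_{q'})$ is not contained in $\mathrm{Inn}_H(A)$, and (ii) $[\mathrm{C}_H(a_{q'}):\mathrm{C}_H(a_{q'})\cap\mathrm{C}_H(A_q)]$ is not divisible by $q$; in particular $[\mathrm{C}_H(a_{q'}):\mathrm{C}_H(a)]$ is not divisible by $q$.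
   Context: $a_q,a_{q'}$ are the $q$-part and $q'$-part of $a$; $A_q$, $A_{q'}$ are the Sylow $q$-subgroup and Hall $q'$-subgroup. $\mathrm{C}_H(S)$ is the pointwise stabilizer of $S$ in $H$, $a^H$ the $H$-orbit of $a$, $\mathrm{Inn}_H(A)$ the image of $H$ in $\mathrm{Aut}(A)$ under the action. A cocyclic coset of $A$ is a coset of a subgroup $K$ with $A/K$ cyclic. $\ell_G(a)$ is the local $G$-class of $a$: the set of $b\in A$ with $b_r$ $G$-conjugate to $a_r$ for every prime $r$. Definition of $\mathcal{E}(G,H,A)$: the set of functions $f:A\to\mathbb{Z}$ constant on $H$-orbits such that (I) $\sum_{X\in\mathrm{Cl}_H(A)}f(X)=1$, where $\mathrm{Cl}_H(A)$ is the set of $H$-orbits; (II) $f$ vanishes outside a single local $G$-class of $A$; (III) $\sum_{c\in C}|\mathrm{C}_H(c)|f(c)\ge0$ for every coset $C$ of a minimal cocyclic subgroup of $A$ (cocyclic subgroup not properly containing another cocyclic subgroup); (IV) $f(b)\ge -h_A[\mathrm{C}_H(b_{\pi_0}):\mathrm{C}_H(b)]$ for all $b\in A$, where $\pi_0$ is the set of primes $r$ dividing $|A|$ with $A_r$ cyclic and $h_A=\frac{\sum_{X\in\pi^-}\prod_{r\in\pi}(r^{k_r-\Delta_X(r)}-1)}{\prod_{r\in\pi}(r-1)r^{k_r-1}}$ with $\pi$ the primes dividing $|A|$, $\pi^-$ the odd-cardinality subsets of $\pi$, $\Delta_X$ the characteristic function of $X$, $k_r$ the rank of the socle of $A_r$;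 (V) $f(b)<0$ for some $b$. *)

From HB Require Import structures.
From mathcomp Require Import all_boot all_order all_algebra all_fingroup all_solvable.
Set Implicit Arguments. Unset Strict Implicit. Unset Printing Implicit Defensive.
Import GRing.Theory Num.Theory.
Local Open Scope group_scope.

Section Defs.
Variables (gT aT : finGroupType) (A : {group gT}) (G : {group aT}).
Variable (to : groupAction G A).

Definition cocyclic (K : {group gT}) : Prop := K \subset A /\ cyclic (A / K).

Definition min_cocyclic (K : {group gT}) : Prop :=
  cocyclic K /\ forall L : {group gT}, cocyclic L -> ~ (L \proper K).

Definition in_local_class (a b : gT) : Prop :=
  b \in A /\ forall r : nat, prime r -> b.`_r \in orbit to G a.`_r.

Definition pi0 : nat_pred := [pred r | (r \in \pi(#|A|)) && cyclic 'O_r(A)].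

Definition krank (r : nat) : nat := logn r #|'Ohm_1('O_r(A))|.

(* the set pi of primes dividing |A| (all such primes are <= |A|) *)
Definition piA : {set 'I_(#|A|.+1)} := [set r : 'I_(#|A|.+1) | (r : nat) \in \pi(#|A|)].

Definition hA : rat :=
  ((\sum_(X in powerset piA | odd #|X|)
      \prod_(r in piA) (((r : nat)%:R : rat) ^+ (krank r - (r \in X)) - 1))
   / \prod_(r in piA) (((r : nat)%:R - 1) * ((r : nat)%:R) ^+ (krank r).-1))%R.

Definition in_E (H : {group aT}) (f : gT -> int) : Prop :=
  (forall x h, x \in A -> h \in H -> f (to x h) = f x) /\
  (\sum_(X in orbit to H @: A) f (repr X) = 1)%R /\
  (exists2 a0, a0 \in A & forall b, b \in A -> ~ in_local_class a0 b -> f b = 0%R) /\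
  (forall K : {group gT}, min_cocyclic K -> forall x, x \in A ->
     (0 <= \sum_(c in K :* x) (#|'C_H[c | to]|%:Z * f c))%R) /\
  (forall b, b \in A ->
     (- hA * (#|'C_H[b.`_pi0 | to] : 'C_H[b | to]|)%:R <= (f b)%:~R :> rat)%R) /\
  (exists2 b, b \in A & (f b < 0)%R).

End Defs.

From HB Require Import structures.
From mathcomp Require Import all_boot all_order all_algebra all_fingroup all_solvable.
From mathcomp Require Import zify.
From Stdlib Require Import Classical.
Import Order.TTheory GRing.Theory Num.Theory.
Local Open Scope group_scope.
Set Implicit Arguments. Unset Strict Implicit. Unset Printing Implicit Defensive.

(* The function f equals f(a) < 0 on the orbit a^H and vanishes off the local
   class of a.  So if a cocyclic coset meets a^H but its intersection with the
   local class stays inside a^H, condition (III) fails on the coset, through a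
   point of a^H, of a minimal cocyclic subgroup it contains: this is (1).

   When A_q' is cyclic, every r <> q has k_r = 1, so that h_A = (Q - 1)/((q - 1) Q)
   with Q = q^(k_q - 1), whence h_A (q - 1) < 1; moreover a_pi0 = a_q' unless h_A = 0.
   Then (IV) at a, with f(a) <= -1, forces [C_H(a_q') : C_H(a)] >= q: this is (2a).

   When moreover A_q = C_q x C_q, both parts of (2b) are proved by producing a
   cocyclic coset contradicting (1).  For (i) it is a<a_q>: its points a_q^j a_q'
   with q not dividing j are images of a under the power automorphisms
   x |-> x_q^j x_q', which are central in C_Aut(A)(A_q'), and a_q' is not in the
   local class of a.  For (ii), a Sylow q-subgroup Q of C_H(a_q') acting
   nontrivially on A_q centralizes a subgroup F of order q and acts trivially on
   A_q/F.  Some b in a^H has b_q outside F, since b |-> b_q is injective on the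
   C_H(a_q')-orbit of a, which has at least q points by (2a); the whole coset
   F b is then a single Q-orbit, hence lies inside a^H. *)

Lemma eq_in_constt (gT : finGroupType) (x : gT) (pi1 pi2 : nat_pred) :
  {in \pi(#[x]), pi1 =i pi2} -> x.`_pi1 = x.`_pi2.
Proof.
move=> eq_pi; rewrite /constt (eq_in_partn eq_pi) (@eq_in_partn pi1^' pi2^') //.
by move=> p /eq_pi; rewrite !inE => ->.
Qed.

Lemma mem_constt (gT : finGroupType) (G : {group gT}) pi x :
  x \in G -> x.`_pi \in G.
Proof. exact: groupX. Qed.

Section LocalClass.
Variables (gT aT : finGroupType) (A : {group gT}) (G : {group aT}).
Variable to : groupAction G A.
Local Notation ell := (in_local_class to).

Lemma gact_constt pi x g : g \in G -> x \in A -> to x.`_pi g = (to x g).`_pi.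
Proof. by move=> Gg Ax; rewrite -!(actmE to Gg) morph_constt. Qed.

Lemma in_local_class_refl x : x \in A -> ell x x.
Proof. by move=> Ax; split=> // r _; apply: orbit_refl. Qed.

Lemma in_local_class_sym x y : x \in A -> ell x y -> ell y x.
Proof. by move=> Ax [Ay xy]; split=> // r r_pr; rewrite orbit_in_sym ?xy. Qed.

Lemma in_local_class_trans x y z : ell x y -> ell y z -> ell x z.
Proof.
move=> [_ xy] [Az yz]; split=> // r r_pr.
exact: orbit_in_trans (yz r r_pr) (xy r r_pr).
Qed.

Lemma orbit_sub_local_class (H : {group aT}) x y :
  H \subset G -> x \in A -> y \in orbit to H x -> ell x y.
Proof.
move=> sHG Ax /orbitP[h Hh <-]; have Gh := subsetP sHG h Hh.
split=> [|r _]; first by rewrite gact_stable.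
by rewrite -gact_constt // mem_orbit.
Qed.

End LocalClass.

Section Cocyclic.
Variables (gT : finGroupType) (A : {group gT}).

Lemma min_cocyclic_exists (K : {group gT}) :
  cocyclic A K -> exists2 L : {group gT}, min_cocyclic A L & L \subset K.
Proof.
move=> [sKA cycAK].
pose P (L : {group gT}) := (L \subset A) && cyclic (A / L).
have [L minL sLK] := @mingroup_exists _ P K (introT andP (conj sKA cycAK)).
have [/andP[sLA cycAL] minLP] := mingroupP minL.
exists L => //; split=> // M [sMA cycAM] ltML.
have eqML := minLP M (introT andP (conj sMA cycAM)) (proper_sub ltML).
by rewrite eqML properxx in ltML.
Qed.

Lemma cocyclic_sub_pcore (q : nat) (K : {group gT}) :
  abelian A -> K \subset 'O_q(A) -> cyclic ('O_q(A) / K) -> cyclic 'O_q^'(A) ->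
  cocyclic A K.
Proof.
move=> abA sKAq cycAqK cycAq'; have sAqA := pcore_sub q A.
have nKA := sub_abelian_norm abA (subset_trans sKAq sAqA).
split; first exact: subset_trans sKAq sAqA.
rewrite -(dprodW (nilpotent_pcoreC q (abelian_nil abA))).
rewrite quotientMl ?(subset_trans sAqA) //.
apply: cyclicM cycAqK (quotient_cyclic K cycAq') _ _.
  apply: subset_trans (quotientS K (pcore_sub q^' A)) _.
  by apply: subset_trans (quotient_abelian K abA) (centS (quotientS K sAqA)).
exact: pnat_coprime (quotient_pgroup _ (pcore_pgroup _ _)) (quotient_pgroup _ (pcore_pgroup _ _)).
Qed.

End Cocyclic.

Section CocyclicCosets.
Variables (gT aT : finGroupType) (A : {group gT}) (G H : {group aT}).
Variables (to : groupAction G A) (f : gT -> int) (a : gT).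
Hypotheses (fE : in_E to H f) (Aa : a \in A) (fa_lt0 : (f a < 0)%R).
Local Notation ell := (in_local_class to).

Lemma in_E_orbit b : b \in orbit to H a -> f b = f a.
Proof. by case: fE => f_inv _ /orbitP[h Hh <-]; apply: f_inv. Qed.

Lemma in_E_notin_local_class b : b \in A -> ~ ell a b -> f b = 0%R.
Proof.
case: fE => _ [_ [[a0 Aa0 f_supp] _]] Ab not_ab.
have a0a : ell a0 a.
  by apply: NNPP => not_a0a; move: fa_lt0; rewrite f_supp ?ltxx.
apply: f_supp => // a0b; apply: not_ab.
exact: in_local_class_trans (in_local_class_sym Aa0 a0a) a0b.
Qed.

Lemma cocyclic_coset_local_class_empty (K : {group gT}) x :
  cocyclic A K -> (forall c, c \in K :* x -> ell a c -> c \in orbit to H a) ->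
  forall c, c \in K :* x -> ~ ell a c.
Proof.
move=> cocK Kx_sub c0 Kx_c0 ac0; have Ac0 : c0 \in A by case: ac0.
have [L minL sLK] := min_cocyclic_exists cocK; have [[sLA _] _] := minL.
have LKx c : c \in L :* c0 -> c \in K :* x.
  by apply/subsetP; rewrite -(rcoset_eqP Kx_c0) mulSg.
have Lc0_A c : c \in L :* c0 -> c \in A.
  by case/rcosetP=> l Ll ->; rewrite groupM // (subsetP sLA).
have weight_le0 c : c \in L :* c0 -> (#|'C_H[c | to]|%:Z * f c <= 0)%R.
  move=> Lc; have [ac | not_ac] := classic (ell a c).
    by rewrite (in_E_orbit (Kx_sub c (LKx c Lc) ac)) mulr_ge0_le0 // ltW.
  by rewrite in_E_notin_local_class ?Lc0_A // mulr0.
case: fE => _ [_ [_ [f_III _]]]; have := f_III L minL c0 Ac0.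
rewrite (bigD1 c0) ?rcoset_refl //=; apply/negP; rewrite -ltNge -[0%R]addr0.
apply: ltr_leD; last by apply: sumr_le0 => c /andP[/weight_le0].
by rewrite (in_E_orbit (Kx_sub c0 Kx_c0 ac0)) pmulr_rlt0 // ltz_nat cardG_gt0.
Qed.

Lemma cocyclic_coset_local_class_dichotomy (K : {group gT}) x :
  cocyclic A K ->
  (forall c, c \in K :* x -> ~ ell a c) \/
  (exists2 c, c \in K :* x & ell a c /\ c \notin orbit to H a).
Proof.
move=> cocK.
have [|no_c] := classic (exists2 c, c \in K :* x & ell a c /\ c \notin orbit to H a).
  by right.
left; apply: cocyclic_coset_local_class_empty cocK _ => c Kxc ac.
by apply/negPn/negP => c_notin; apply: no_c; exists c.
Qed.

End CocyclicCosets.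

Section HA.
Variables (gT : finGroupType) (A : {group gT}).

Lemma piA_prime (r : 'I_#|A|.+1) : r \in piA A -> prime r.
Proof. by rewrite inE mem_primes => /andP[]. Qed.

Lemma hA_summand_eq0 (X : {set 'I_#|A|.+1}) (r : 'I_#|A|.+1) :
  r \in piA A -> r \in X -> krank A r = 1%N ->
  (\prod_(s in piA A) (((s : nat)%:R : rat) ^+ (krank A s - (s \in X)) - 1) = 0)%R.
Proof. by move=> piAr Xr kr1; rewrite (bigD1 r) //= Xr kr1 subnn expr0 subrr mul0r. Qed.

Lemma hA_eq0 : {in \pi(#|A|), forall r, krank A r = 1%N} -> hA A = 0%R.
Proof.
move=> krank1; rewrite /hA big1 ?mul0r // => X /andP[piA_X oddX].
have [r Xr] : exists r, r \in X.
  by apply/set0Pn; apply: contraTneq oddX => ->; rewrite cards0.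
have piAr : r \in piA A by rewrite powersetE in piA_X; apply: (subsetP piA_X).
have pir : (r : nat) \in \pi(#|A|) by rewrite inE in piAr.
exact: hA_summand_eq0 piAr Xr (krank1 _ pir).
Qed.

Variable q : nat.
Hypothesis krank1 : {in \pi(#|A|), forall r, r != q -> krank A r = 1%N}.
Let Q : rat := (q%:R ^+ (krank A q).-1)%R.

Lemma hA_eq : q \in \pi(#|A|) -> hA A = ((Q - 1) / ((q%:R - 1) * Q))%R.
Proof.
move=> piq; have q_lt : q < #|A|.+1.
  by move: piq; rewrite mem_primes ltnS => /and3P[_ A_gt0 /dvdn_leq->].
pose q0 : 'I_#|A|.+1 := Ordinal q_lt.
have piAq0 : q0 \in piA A by rewrite inE.
have krank1_ne r : r \in piA A -> r != q0 -> krank A r = 1%N.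
  move=> piAr ne_rq; apply: krank1; first by rewrite inE in piAr.
  by apply: contra ne_rq => /eqP eq_rq; apply/eqP/val_inj.
rewrite /hA; pose R : rat := (\prod_(r in piA A | r != q0) ((r : nat)%:R - 1))%R.
have -> : (\sum_(X in powerset (piA A) | odd #|X|)
      \prod_(r in piA A) (((r : nat)%:R : rat) ^+ (krank A r - (r \in X)) - 1))%R
      = ((Q - 1) * R)%R.
  rewrite (bigD1 [set q0]) /=; last by rewrite powersetE sub1set piAq0 cards1.
  rewrite [X in (_ + X)%R]big1 ?addr0; last first.
    move=> X /andP[/andP[sX oddX] ne_Xq0].
    have /subsetPn[r Xr] : ~~ (X \subset [set q0]).
      by rewrite subset1 negb_or ne_Xq0; apply: contraTneq oddX => ->; rewrite cards0.
    rewrite powersetE in sX; rewrite inE => ne_rq; have piAr := subsetP sX r Xr.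
    exact: hA_summand_eq0 piAr Xr (krank1_ne r piAr ne_rq).
  rewrite (bigD1 q0) //= inE eqxx subn1; congr (_ * _)%R.
  by apply: eq_bigr => r /andP[piAr ne_rq]; rewrite inE (negPf ne_rq) subn0 krank1_ne.
have -> : (\prod_(r in piA A) (((r : nat)%:R - 1) * ((r : nat)%:R) ^+ (krank A r).-1) : rat)%R
      = ((q%:R - 1) * Q * R)%R.
  rewrite (bigD1 q0) //=; congr (_ * _)%R.
  by apply: eq_bigr => r /andP[piAr ne_rq]; rewrite krank1_ne // expr0 mulr1.
have R_gt0 : (0 < R)%R.
  by apply: prodr_gt0 => r /andP[/piA_prime/prime_gt1 r_gt1 _]; rewrite subr_gt0 ltr1n.
by rewrite [X in (_ / X)%R]mulrC invfM mulrA mulfK // gt_eqF.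
Qed.

Lemma hA_mul_lt1 : prime q -> (hA A * (q.-1)%:R < 1 :> rat)%R.
Proof.
move=> q_pr; have [piq | not_piq] := boolP (q \in \pi(#|A|)); last first.
  rewrite hA_eq0 ?mul0r ?ltr01 // => r piAr.
  by apply: krank1 => //; apply: contraNneq not_piq => <-.
have Q_ge1 : (1 <= Q)%R by rewrite exprn_ege1 // ler1n prime_gt0.
have q_gt1 : (1 < (q%:R : rat))%R by rewrite ltr1n prime_gt1.
rewrite hA_eq // -subn1 natrB ?prime_gt0 // mulrAC invfM mulrA mulfK; last first.
  by rewrite subr_eq0 gt_eqF.
by rewrite ltr_pdivrMr ?mul1r ?gtrDl ?(lt_le_trans ltr01).
Qed.

End HA.

Lemma cyclic_pcore_ne (gT : finGroupType) (A : {group gT}) (q r : nat) :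
  cyclic 'O_q^'(A) -> r != q -> cyclic 'O_r(A).
Proof.
move=> cycAq' ne_rq; apply: cyclicS cycAq'; apply: pcore_max (pcore_normal _ _).
by apply: sub_pgroup (pcore_pgroup _ _) => p; rewrite !inE => /eqP->.
Qed.

Section AbelianCores.
Variables (gT : finGroupType) (A : {group gT}).
Hypothesis abA : abelian A.

Lemma mem_pcore_abelian pi x : x \in A -> (x \in 'O_pi(A)) = pi.-elt x.
Proof.
move=> Ax; have nilA := abelian_nil abA.
exact: mem_normal_Hall (nilpotent_pcore_Hall pi nilA) (pcore_normal _ _) Ax.
Qed.

Lemma constt_pcore pi x : x \in A -> x.`_pi \in 'O_pi(A).
Proof.
by move=> Ax; rewrite mem_pcore_abelian ?p_elt_constt ?mem_constt.
Qed.

Lemma krank_cyclic r : r \in \pi(#|A|) -> cyclic 'O_r(A) -> krank A r = 1%N.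
Proof.
move=> pir cycAr; have r_pr : prime r by move: pir; rewrite mem_primes => /andP[].
rewrite /krank (Ohm1_cyclic_pgroup_prime cycAr (pcore_pgroup _ _)) ?logn_prime ?eqxx //.
rewrite trivg_card1 (card_Hall (nilpotent_pcore_Hall r (abelian_nil abA))).
by rewrite -p_part_gt1 in pir; rewrite gtn_eqF.
Qed.

Variable q : nat.
Hypothesis cycAq' : cyclic 'O_q^'(A).

Lemma krank_pcore_ne : {in \pi(#|A|), forall r, r != q -> krank A r = 1%N}.
Proof. by move=> r pir ne_rq; rewrite krank_cyclic ?(cyclic_pcore_ne _ ne_rq). Qed.

Lemma hA_eq0_cyclic : cyclic 'O_q(A) -> hA A = 0%R.
Proof.
move=> cycAq; apply: hA_eq0 => r pir.
have [eq_rq | ne_rq] := eqVneq r q; last exact: krank_pcore_ne.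
by apply: krank_cyclic; rewrite ?eq_rq // -eq_rq.
Qed.

Lemma constt_pi0 x : x \in A -> ~~ cyclic 'O_q(A) -> x.`_(pi0 A) = x.`_q^'.
Proof.
move=> Ax not_cycAq; apply: eq_in_constt => p pi_xp.
have piAp : p \in \pi(#|A|) by apply: (pi_of_dvd (order_dvdG Ax) (cardG_gt0 A)).
rewrite !inE piAp /=; have [->|ne_pq] := eqVneq p q; first exact: negPf.
by rewrite (cyclic_pcore_ne _ ne_pq).
Qed.

End AbelianCores.

Lemma astab1_constt (gT aT : finGroupType) (A : {group gT}) (G H : {group aT})
    (to : groupAction G A) pi x :
  x \in A -> 'C_H[x | to] \subset 'C_H[x.`_pi | to].
Proof.
move=> Ax; apply/subsetP => h /setIP[Hh cxh]; have Gh := astab_dom cxh.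
rewrite inE Hh !inE Gh sub1set inE /= gact_constt //.
by rewrite (astab_act cxh) ?set11.
Qed.

Section IndexBound.
Variables (gT aT : finGroupType) (A : {group gT}) (G H : {group aT}).
Variables (to : groupAction G A) (q : nat) (f : gT -> int) (a : gT).
Hypotheses (abA : abelian A) (q_pr : prime q) (fE : in_E to H f).
Hypotheses (Aa : a \in A) (fa_lt0 : (f a < 0)%R) (cycAq' : cyclic 'O_q^'(A)).

Lemma in_E_index_ge : q <= #|'C_H[a.`_q^' | to] : 'C_H[a | to]|.
Proof.
case: fE => _ [_ [_ [_ [f_IV _]]]]; have := f_IV a Aa.
have fa_le : ((f a)%:~R <= -1 :> rat)%R.
  have : (f a <= -1)%R by lia.
  by rewrite -(ler_int rat) rmorphN1.
move/le_trans/(_ fa_le); rewrite mulNr lerN2.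
have [cycAq | not_cycAq] := boolP (cyclic 'O_q(A)).
  by rewrite (hA_eq0_cyclic abA cycAq' cycAq) mul0r ler10.
rewrite (constt_pi0 cycAq') //; set m := #|_ : _| => hA_m_ge1.
have hA_gt0 : (0 < hA A)%R.
  rewrite ltNge; apply: contraTN hA_m_ge1 => hA_le0; rewrite -ltNge.
  by apply: le_lt_trans ltr01; rewrite mulr_le0_ge0.
rewrite leqNgt; apply: contraTN (hA_mul_lt1 (krank_pcore_ne abA cycAq') q_pr) => m_lt_q.
rewrite -leNgt (le_trans hA_m_ge1) // ler_pM2l // ler_nat -ltnS prednK ?prime_gt0 //.
Qed.

Lemma astab1_pcoreC_sub :
  'C_H[a.`_q^' | to] :&: 'C_H('O_q(A) | to) \subset 'C_H[a | to].
Proof.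
apply/subsetP => h /setIP[/setIP[Hh ca'h] /setIP[_ cAqh]]; have Gh := astab_dom ca'h.
rewrite inE Hh !inE Gh sub1set inE /= -{1}(consttC q a) gactM ?mem_constt //.
by rewrite (astab_act cAqh (constt_pcore abA q Aa)) (astab_act ca'h (set11 _)) consttC.
Qed.

Lemma index_astab1_dvd_index_pcoreC :
  #|'C_H[a.`_q^' | to] : 'C_H[a | to]|
    %| #|'C_H[a.`_q^' | to] : 'C_H[a.`_q^' | to] :&: 'C_H('O_q(A) | to)|.
Proof. by rewrite -(Lagrange_index (astab1_constt H to q^' Aa) astab1_pcoreC_sub) dvdn_mulr. Qed.

Lemma in_E_index_pcoreC_ge :
  q <= #|'C_H[a.`_q^' | to] : 'C_H[a.`_q^' | to] :&: 'C_H('O_q(A) | to)|.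
Proof.
apply: leq_trans in_E_index_ge (dvdn_leq _ index_astab1_dvd_index_pcoreC).
exact: indexg_gt0.
Qed.

Lemma in_E_constt_neq1 : a.`_q != 1.
Proof.
apply: contraTneq in_E_index_ge => aq1.
by rewrite -{2}(consttC q a) aq1 mul1g indexgg -ltnNge prime_gt1.
Qed.

End IndexBound.

Lemma expg_pair (T1 T2 : finGroupType) (x : T1 * T2) n : x ^+ n = (x.1 ^+ n, x.2 ^+ n).
Proof. by elim: n => [|n IHn]; rewrite ?expg0 // !expgS IHn. Qed.

Section Zp2.
Variable q : nat.
Hypothesis q_gt1 : 1 < q.

Lemma card_Zp2 : #|[set: 'Z_q * 'Z_q]| = (q ^ 2)%N.
Proof. by rewrite cardsT card_prod card_ord Zp_cast // mulnn. Qed.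

Lemma expg_Zp2 (x : 'Z_q * 'Z_q) : x ^+ q = 1.
Proof.
have card_Zq : #|[set: 'Z_q]| = q by rewrite cardsT card_ord Zp_cast.
have expZq (y : 'Z_q) : y ^+ q = 1.
  by rewrite -[in X in _ ^+ X]card_Zq expg_cardG ?inE.
by rewrite expg_pair !expZq.
Qed.

Lemma card_isog_Zp2 (gT : finGroupType) (V : {group gT}) :
  V \isog [set: 'Z_q * 'Z_q] -> #|V| = (q ^ 2)%N.
Proof. by move/card_isog->; rewrite card_Zp2. Qed.

Lemma expg_isog_Zp2 (gT : finGroupType) (V : {group gT}) x :
  V \isog [set: 'Z_q * 'Z_q] -> x \in V -> x ^+ q = 1.
Proof.
move=> isoV Vx; apply/eqP; rewrite -order_dvdn (dvdn_trans (dvdn_exponent Vx)) //.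
by rewrite (exponent_isog isoV); apply/exponentP => y _; rewrite expg_Zp2.
Qed.

End Zp2.

Section PowerAut.
Variables (gT : finGroupType) (A : {group gT}) (k : nat).
Hypotheses (abA : abelian A) (coAk : coprime #|A| k).

Lemma power_inj : {in A &, injective (expgn^~ k)}.
Proof. by move=> x y Ax Ay eq_xy; rewrite -(expgK coAk Ax) -(expgK coAk Ay) /= eq_xy. Qed.

Lemma power_closed : [set x ^+ k | x in A] \subset A.
Proof. by apply/subsetP => _ /imsetP[x Ax ->]; rewrite groupX. Qed.

Definition power_aut := perm_in power_inj power_closed.

Lemma power_autE : {in A, power_aut =1 expgn^~ k}.
Proof. exact: perm_inE. Qed.

Lemma Aut_power_aut : power_aut \in Aut A.
Proof.
rewrite inE perm_in_on; apply/morphicP => x y Ax Ay.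
by rewrite !power_autE ?groupM // expgMn //; apply: (centsP abA).
Qed.

Lemma power_aut_cent (B : {set {perm gT}}) : B \subset Aut A -> power_aut \in 'C(B).
Proof.
move=> sBAut; apply/centP => t Bt; have AutAt := subsetP sBAut t Bt.
apply/permP => x; rewrite !permM.
have [Ax | not_Ax] := boolP (x \in A); last by rewrite !(out_Aut _ not_Ax) ?Aut_power_aut.
by rewrite !power_autE ?(Aut_closed AutAt) // -{1}(autmE AutAt) morphX.
Qed.

End PowerAut.

Lemma pcore_power_aut (gT : finGroupType) (A : {group gT}) (q j : nat) :
  abelian A -> prime q -> ~~ (q %| j) ->
  exists2 s : {perm gT}, s \in 'Z('C_(Aut A)('O_q^'(A) | 'P))
    & {in A, forall x, s x = x.`_q ^+ j * x.`_q^'}.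
Proof.
move=> abA q_pr q'j; set m := #|'O_q(A)|; set n := #|'O_q^'(A)|.
have co_mn : coprime m n := pnat_coprime (pcore_pgroup _ _) (pcore_pgroup _ _).
pose k := chinese m n j 1.
have co_jm : coprime j m.
  by apply: p'nat_coprime (pcore_pgroup q A); rewrite p'natE.
have co_Ak : coprime #|A| k.
  rewrite -(dprod_card (nilpotent_pcoreC q (abelian_nil abA))) coprimeMl -/m -/n.
  rewrite ![coprime _ k]coprime_sym -coprime_modl (chinese_modl co_mn) coprime_modl co_jm.
  by rewrite -coprime_modl (chinese_modr co_mn) coprime_modl coprime1n.
have k_mod_m : k %% m = j %% m := chinese_modl co_mn j 1.
have k_mod_n : k %% n = 1 %% n := chinese_modr co_mn j 1.
have powE x : x \in A -> x ^+ k = x.`_q ^+ j * x.`_q^'.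
  move=> Ax; rewrite -{1}(consttC q x) expgMn; last exact: commuteX2.
  have xq_m : x.`_q ^+ m = 1 := expg_cardG (constt_pcore abA q Ax).
  have xq'_n : x.`_q^' ^+ n = 1 := expg_cardG (constt_pcore abA q^' Ax).
  rewrite -[x.`_q ^+ k](expg_mod _ xq_m) k_mod_m (expg_mod _ xq_m).
  by rewrite -[x.`_q^' ^+ k](expg_mod _ xq'_n) k_mod_n expg_mod.
exists (power_aut co_Ak); last by move=> x Ax; rewrite power_autE ?powE.
rewrite inE power_aut_cent ?subsetIl // andbT inE (Aut_power_aut abA).
apply/astabP => x Aq'x; have Ax := subsetP (pcore_sub _ _) x Aq'x.
rewrite mem_pcore_abelian // in Aq'x.
have xq1 : x.`_q = 1 by apply/constt1P.
by rewrite /= apermE power_autE // powE // xq1 expg1n mul1g constt_p_elt.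
Qed.

Section PGroupOnSquare.
Variables (gT aT : finGroupType) (R : {group gT}) (D : {group aT}).
Variables (to : groupAction D R) (q : nat) (Q : {group aT}) (V : {group gT}).
Hypotheses (q_pr : prime q) (pQ : q.-group Q) (sQD : Q \subset D) (sVR : V \subset R).
Hypotheses (nVQ : [acts Q, on V | to]) (cardV : #|V| = (q ^ 2)%N).
Hypothesis ntQV : ~~ (Q \subset 'C(V | to)).
Local Notation F := 'C_(V | to)(Q).

Lemma card_gacent_pgroup : #|F| = q.
Proof.
have := pgroup_fix_mod pQ nVQ; rewrite -subgacentE // cardV => modF.
have q_dvdF : q %| #|F| by rewrite /dvdn -modF expnS modnMr.
have : #|F| %| q ^ 2 by rewrite -cardV cardSg // subsetIl.
case/(dvdn_pfactor _ _ q_pr) => -[|[|[|m]]] // _ cardF.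
  by rewrite cardF dvdn1 in q_dvdF; move: q_pr; rewrite (eqP q_dvdF).
case/negP: ntQV; rewrite astabCin //.
have/eqP <- : F == V :> {set gT} by rewrite eqEcard subsetIl cardF cardV leqnn.
by rewrite subgacentE // subsetIr.
Qed.

Lemma gacent_fixed h p : h \in Q -> p \in F -> to p h = p.
Proof. by move=> Qh; rewrite subgacentE // => /setIP[_ /afixP->]. Qed.

Lemma setact_rcoset_gacent h v : h \in Q -> v \in V -> to^*%act (F :* v) h = F :* to v h.
Proof.
move=> Qh Vv; have Dh := subsetP sQD h Qh; have Rv := subsetP sVR v Vv.
have sFR : F \subset R := subset_trans (subsetIl _ _) sVR.
have act_pv p : p \in F -> to (p * v) h = p * to v h.
  by move=> Fp; rewrite (gactM to Dh (subsetP sFR p Fp) Rv) gacent_fixed.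
rewrite /= setactE; apply/setP => z.
apply/imsetP/rcosetP => [[_ /rcosetP[p Fp ->] ->] | [p Fp ->]].
  by exists p; rewrite ?act_pv.
by exists (p * v); rewrite ?act_pv // mem_rcoset mulgK.
Qed.

Lemma gact_mem_rcoset_gacent h v : h \in Q -> v \in V -> to v h \in F :* v.
Proof.
move=> Qh Vv; set S := rcosets F V.
have nSQ : [acts Q, on S | to^*].
  apply/subsetP => g Qg; rewrite !inE (subsetP sQD g Qg); apply/subsetP => _ /rcosetsP[u Vu ->].
  by rewrite inE setact_rcoset_gacent //; apply/rcosetsP; exists (to u g); rewrite ?(acts_act nVQ).
have cardS : #|S| = q.
  rewrite -[#|S|]/#|V : F| -divgS ?subsetIl // card_gacent_pgroup cardV.
  by rewrite expnS expn1 mulnK ?prime_gt0.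
have FS : (F : {set gT}) \in 'Fix_(S | to^*)(Q).
  rewrite inE; apply/andP; split; first by apply/rcosetsP; exists 1; rewrite ?rcoset1.
  by apply/afixP => g Qg; rewrite -[F]rcoset1 setact_rcoset_gacent ?gact1 ?(subsetP sQD).
have fixS : 'Fix_(S | to^*)(Q) = S.
  have := pgroup_fix_mod pQ nSQ; rewrite cardS modnn => /esym/eqP q_dvd_fix.
  by apply/eqP; rewrite eqEcard subsetIl cardS dvdn_leq //; apply/card_gt0P; exists (F : {set gT}).
have : F :* v \in 'Fix_(S | to^*)(Q) by rewrite fixS; apply/rcosetsP; exists v.
case/setIP => _ /afixP/(_ h Qh); rewrite setact_rcoset_gacent // => <-.
exact: rcoset_refl.
Qed.

Lemma orbit_gacent_rcoset v : v \in V -> v \notin F -> orbit to Q v = F :* v.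
Proof.
move=> Vv notFv; apply/eqP; rewrite eqEcard card_rcoset card_gacent_pgroup.
have -> : orbit to Q v \subset F :* v.
  by apply/subsetP => _ /orbitP[h Qh <-]; apply: gact_mem_rcoset_gacent.
rewrite card_orbit_in //.
have /p_natP[[|k] idx_v] : q.-nat #|Q : 'C_Q[v | to]| := pnat_dvd (dvdn_indexg _ _) pQ.
  case/negP: notFv; move/eqP: idx_v; rewrite indexg_eq1 => sQCv.
  rewrite subgacentE // inE Vv; apply/afixP => h Qh.
  by have /setIP[_ /astab_act->] := subsetP sQCv h Qh; rewrite ?set11.
by rewrite idx_v expnS leq_pmulr ?expn_gt0 ?prime_gt0.
Qed.

End PGroupOnSquare.

Lemma Sylow_not_sub_index (gT : finGroupType) (G N P : {group gT}) p :
  prime p -> p.-Sylow(G) P -> N \subset G -> p %| #|G : N| -> ~~ (P \subset N).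
Proof.
move=> p_pr sylP sNG p_dvd; apply/negP => sPN; case/and3P: sylP => _ _ p'_idx.
have: p^'.-nat #|G : N|.
  by apply: pnat_dvd p'_idx; rewrite -(Lagrange_index sNG sPN) dvdn_mulr.
by rewrite p'natE // p_dvd.
Qed.

Section OrbitConstt.
Variables (gT aT : finGroupType) (A : {group gT}) (G H : {group aT}).
Variables (to : groupAction G A) (q : nat) (f : gT -> int) (a : gT).
Hypotheses (abA : abelian A) (sHG : H \subset G) (q_pr : prime q) (fE : in_E to H f).
Hypotheses (Aa : a \in A) (fa_lt0 : (f a < 0)%R) (cycAq' : cyclic 'O_q^'(A)).
Local Notation Hc := 'C_H[a.`_q^' | to].

Lemma orbit_constt_pcoreC b : b \in orbit to Hc a -> b.`_q^' = a.`_q^'.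
Proof.
case/orbitP => h /setIP[Hh ca'h] <-.
by rewrite -gact_constt ?(subsetP sHG) // (astab_act ca'h) ?set11.
Qed.

Lemma exists_orbit_constt_notin (F : {group gT}) :
  #|F| = q -> exists2 b, b \in orbit to Hc a & b.`_q \notin F.
Proof.
move=> cardF; apply/exists_inP; rewrite -negb_forall_in; apply/negP => /forall_inP orbit_F.
have sHcG : Hc \subset G := subset_trans (subsetIl _ _) sHG.
have aq_ne1 := in_E_constt_neq1 abA q_pr fE Aa fa_lt0 cycAq'.
have orbit_F1 b : b \in orbit to Hc a -> b.`_q \in F :\ 1.
  move=> Hc_ab; rewrite 2!inE orbit_F // andbT.
  case/orbitP: Hc_ab => h Hc_h <-; rewrite -gact_constt ?(subsetP sHcG) //.
  apply: contra aq_ne1 => /eqP aq_h1; apply/eqP; apply: (act_inj to h).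
  by rewrite aq_h1 gact1 // (subsetP sHcG).
have inj_q : {in orbit to Hc a &, injective (fun b => b.`_q)}.
  move=> b1 b2 Hc_ab1 Hc_ab2 eq_q.
  by rewrite -(consttC q b1) -(consttC q b2) eq_q !orbit_constt_pcoreC.
have CHc_a : 'C_Hc[a | to] = 'C_H[a | to].
  by rewrite setIAC; apply/setIidPl; apply: subset_trans (astab1_constt _ _ _ Aa) (subsetIr _ _).
have sub_img : [set b.`_q | b in orbit to Hc a] \subset F :\ 1.
  by apply/subsetP => _ /imsetP[b Hc_ab ->]; apply: orbit_F1.
have cardF1 : #|F :\ 1| = q.-1 by move: (cardsD1 1 F); rewrite group1 cardF add1n => ->.
have := subset_leq_card sub_img; rewrite card_in_imset // card_orbit_in // CHc_a cardF1.
move/(leq_trans (in_E_index_ge abA q_pr fE Aa fa_lt0 cycAq')).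
by rewrite leqNgt ltn_predL prime_gt0.
Qed.
End OrbitConstt.

Section ElementaryAbelianPcore.
Variables (gT aT : finGroupType) (A : {group gT}) (G H : {group aT}).
Variables (to : groupAction G A) (q : nat) (f : gT -> int) (a : gT).
Hypotheses (abA : abelian A) (sHG : H \subset G) (q_pr : prime q) (fE : in_E to H f).
Hypotheses (Aa : a \in A) (fa_lt0 : (f a < 0)%R) (cycAq' : cyclic 'O_q^'(A)).
Hypothesis isoAq : 'O_q(A) \isog [set: 'Z_q * 'Z_q].

Lemma cocyclic_pcore_prime_index (K : {group gT}) :
  K \subset 'O_q(A) -> #|K| = q -> cocyclic A K.
Proof.
move=> sKAq cardK; apply: (cocyclic_sub_pcore abA sKAq) cycAq'; apply: prime_cyclic.
have nKAq := sub_abelian_norm (abelianS (pcore_sub q A) abA) sKAq.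
rewrite card_quotient // -divgS // (card_isog_Zp2 (prime_gt1 q_pr) isoAq) cardK.
by rewrite expnS expn1 mulKn ?prime_gt0.
Qed.

Lemma in_E_center_not_sub :
  ~~ ('Z('C_(Aut A)('O_q^'(A) | 'P)) \subset actperm to @* H).
Proof.
apply/negP => sZH; have Aq_aq := constt_pcore abA q Aa.
have aq_ne1 := in_E_constt_neq1 abA q_pr fE Aa fa_lt0 cycAq'.
have o_aq : #[a.`_q] = q.
  apply/prime_nt_dvdP; rewrite ?order_eq1 ?order_dvdn //.
  by rewrite (expg_isog_Zp2 (prime_gt1 q_pr) isoAq).
have cocK : cocyclic A <[a.`_q]> by apply: cocyclic_pcore_prime_index; rewrite ?cycle_subG.
apply: (cocyclic_coset_local_class_empty fE Aa fa_lt0 cocK _ (rcoset_refl _ a));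
  last exact: (in_local_class_refl to Aa).
move=> _ /rcosetP[_ /cycleP[i ->] ->].
rewrite -[X in _ ^+ i * X](consttC q a) mulgA -expgSr => a_z.
have [q_dvd | q'i] := boolP (q %| i.+1); last first.
  have [s Zs sa] := pcore_power_aut abA q_pr q'i.
  case/morphimP: (subsetP sZH s Zs) => h Gh Hh def_s.
  by rewrite -sa // def_s actpermE mem_orbit.
have a'_q : a.`_q^'.`_q = 1 by apply/constt1P/p_elt_constt.
case: a_z => _ /(_ q q_pr); rewrite -o_aq order_dvdn in q_dvd.
rewrite (eqP q_dvd) mul1g a'_q => /orbitP[g Gg aq_g].
by rewrite -(gact1 to Gg) in aq_g; rewrite (act_inj to g aq_g) eqxx in aq_ne1.
Qed.

Lemma in_E_index_pcoreC_not_dvd :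
  ~~ (q %| #|'C_H[a.`_q^' | to] : 'C_H[a.`_q^' | to] :&: 'C_H('O_q(A) | to)|).
Proof.
apply/negP; set Hc := 'C_H[a.`_q^' | to] => q_dvd.
have [Q sylQ] := Sylow_exists q Hc; have sQHc := pHall_sub sylQ.
have sQH : Q \subset H := subset_trans sQHc (subsetIl _ _).
have sQG := subset_trans sQH sHG.
have ntQ : ~~ (Q \subset 'C('O_q(A) | to)).
  apply: contra (Sylow_not_sub_index q_pr sylQ (subsetIl _ _) q_dvd) => sQC.
  by rewrite subsetI sQHc subsetI sQH.
have nAqQ : [acts Q, on 'O_q(A) | to] := acts_char to sQG (pcore_char _ _).
have cardAq := card_isog_Zp2 (prime_gt1 q_pr) isoAq.
have cardF := card_gacent_pgroup q_pr (pHall_pgroup sylQ) sQG (pcore_sub _ _) nAqQ cardAq ntQ.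
set F := 'C_('O_q(A) | to)(Q) in cardF.
have [b Hc_ab not_Fbq] := exists_orbit_constt_notin abA sHG q_pr fE Aa fa_lt0 cycAq' cardF.
have H_ab : b \in orbit to H a.
  by case/orbitP: (Hc_ab) => h /setIP[Hh _] <-; apply: mem_orbit.
have Ab := (orbit_sub_local_class sHG Aa H_ab).1; have Aq_bq := constt_pcore abA q Ab.
have orbit_bq := orbit_gacent_rcoset q_pr (pHall_pgroup sylQ) sQG (pcore_sub _ _)
  nAqQ cardAq ntQ Aq_bq not_Fbq.
have cocF : cocyclic A [group of F] := cocyclic_pcore_prime_index (subsetIl _ _) cardF.
apply: (cocyclic_coset_local_class_empty fE Aa fa_lt0 cocF _ (rcoset_refl _ b));
  last exact: (orbit_sub_local_class sHG Aa H_ab).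
move=> _ /rcosetP[p Fp ->] _.
have : p * b.`_q \in orbit to Q b.`_q by rewrite orbit_bq; apply/rcosetP; exists p.
case/orbitP => g Qg def_pbq; have /setIP[_ ca'g] := subsetP sQHc g Qg.
have -> : p * b = to b g.
  rewrite -{1 2}(consttC q b) gactM ?(subsetP sQG) ?mem_constt ?def_pbq ?mulgA //.
  by rewrite (orbit_constt_pcoreC sHG Aa Hc_ab) (astab_act ca'g) ?set11.
case/orbitP: H_ab => h Hh <-; have Hg := subsetP sQH g Qg.
by rewrite -actMin ?(subsetP sHG) // mem_orbit ?groupM.
Qed.

End ElementaryAbelianPcore.

Theorem lemma3p1 (gT aT : finGroupType) (A : {group gT}) (G H : {group aT})
    (to : groupAction G A) (q : nat) (f : gT -> int) (a : gT) :
  abelian A -> H \subset G -> prime q ->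
  in_E to H f -> a \in A -> (f a < 0)%R ->
  (* (1) *)
  (forall K : {group gT}, cocyclic A K -> forall x, x \in A ->
     (forall c, c \in K :* x -> ~ in_local_class to a c) \/
     (exists2 c, c \in K :* x & in_local_class to a c /\ c \notin orbit to H a)) /\
  (* (2) *)
  (cyclic 'O_q^'(A) ->
     (* (a) *)
     (q <= #|'C_H[a.`_q^' | to] : 'C_H[a | to]| /\
      q <= #|'C_H[a.`_q^' | to] : 'C_H[a.`_q^' | to] :&: 'C_H('O_q(A) | to)|) /\
     (* (b) *)
     ('O_q(A) \isog [set: 'Z_q * 'Z_q] ->
        ~~ ('Z('C_(Aut A)('O_q^'(A) | 'P)) \subset actperm to @* H) /\
        ~~ (q %| #|'C_H[a.`_q^' | to] : 'C_H[a.`_q^' | to] :&: 'C_H('O_q(A) | to)|) /\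
        ~~ (q %| #|'C_H[a.`_q^' | to] : 'C_H[a | to]|))).
Proof.
move=> abA sHG q_pr fE Aa fa_lt0; split.
  by move=> K cocK x _; apply: (cocyclic_coset_local_class_dichotomy fE Aa fa_lt0 x cocK).
move=> cycAq'; split.
  split; first exact: (in_E_index_ge abA q_pr fE Aa fa_lt0 cycAq').
  exact: (in_E_index_pcoreC_ge abA q_pr fE Aa fa_lt0 cycAq').
move=> isoAq; split.
  exact: (in_E_center_not_sub abA q_pr fE Aa fa_lt0 cycAq' isoAq).
have not_dvd := in_E_index_pcoreC_not_dvd abA sHG q_pr fE Aa fa_lt0 cycAq' isoAq.
split=> //; apply: contra not_dvd => /dvdn_trans; apply.
exact: (index_astab1_dvd_index_pcoreC H to q abA Aa).
Qed.
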